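(* For any types $T,R$ and any scalar $\alpha\in\mathcal S$: if $T\preceq R$ then $\alpha.T\preceq\alpha.R$.
   Context: Fix a commutative ring $(\mathcal S,+,\times)$. Types: $T ::= U \mid \forall X.T \mid \alpha.T \mid \overline0$; unit types: $U ::= X \mid U\to T \mid \forall X.U$. Type variables are only substituted by unit types, with $(\alpha.T)[U/X]=\alpha.T[U/X]$. Type equivalence $\equiv$ is the least congruence with $\alpha.\overline0\equiv\overline0$, $0.T\equiv\overline0$, $1.T\equiv T$, $\alpha.(\beta.T)\equiv(\alpha\times\beta).T$, $\forall X.\alpha.T\equiv\alpha.\forall X.T$. Write $T\prec R$ if either $R\equiv\forall X.T$ for some $X$, or $T\equiv\forall X.S$ and $R\equiv S[U/X]$ for some type $S$ and unit type $U$; $\preceq$ is the reflexive and transitive closure of $\prec$. *)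

(* Types of the scalar lambda-calculus over a commutative ring S,
   with de Bruijn indices for type variables. *)
From mathcomp Require Import all_boot all_algebra.
Set Implicit Arguments. Unset Strict Implicit. Unset Printing Implicit Defensive.
Import GRing.Theory.
Local Open Scope ring_scope.

Inductive ty (S : Type) : Type :=
| TVar : nat -> ty S
| TArr : ty S -> ty S -> ty S
| TAll : ty S -> ty S
| TScal : S -> ty S -> ty S
| TZero : ty S.
Arguments TVar {S}. Arguments TZero {S}.

Fixpoint is_unit (S : Type) (t : ty S) : bool :=
  match t with
  | TVar _ => true
  | TArr u r => is_unit u && is_type r
  | TAll u => is_unit u
  | _ => false
  end
with is_type (S : Type) (t : ty S) : bool :=
  match t with
  | TVar _ => true
  | TArr u r => is_unit u && is_type r
  | TAll r => is_type r
  | TScal _ r => is_type r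
  | TZero => true
  end.

Fixpoint lift (S : Type) (k d : nat) (t : ty S) : ty S :=
  match t with
  | TVar m => if (m < k)%N then TVar m else TVar (m + d)
  | TArr u r => TArr (lift k d u) (lift k d r)
  | TAll r => TAll (lift k.+1 d r)
  | TScal a r => TScal a (lift k d r)
  | TZero => TZero
  end.

(* capture-avoiding substitution of U for the variable of index k;
   subst 0 U S is S[U/X] when S is the body of forall X. S.
   Note (a.T)[U/X] = a.(T[U/X]). *)
Fixpoint subst (S : Type) (k : nat) (U t : ty S) : ty S :=
  match t with
  | TVar m => if m == k then lift 0 k U
              else if (k < m)%N then TVar m.-1 else TVar m
  | TArr u r => TArr (subst k U u) (subst k U r)
  | TAll r => TAll (subst k.+1 U r)
  | TScal a r => TScal a (subst k U r)
  | TZero => TZero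
  end.

(* abstraction of the free variable named n (free index n), under k binders:
   TAll (abs 0 n T) is forall X. T where X is the free variable n of T. *)
Fixpoint abs (S : Type) (k n : nat) (t : ty S) : ty S :=
  match t with
  | TVar m => if (m < k)%N then TVar m
              else if m == (n + k)%N then TVar k else TVar m.+1
  | TArr u r => TArr (abs k n u) (abs k n r)
  | TAll r => TAll (abs k.+1 n r)
  | TScal a r => TScal a (abs k n r)
  | TZero => TZero
  end.

Inductive ty_equiv (S : comPzRingType) : ty S -> ty S -> Prop :=
| eq_refl T : is_type T -> ty_equiv T T
| eq_sym T R : ty_equiv T R -> ty_equiv R T
| eq_trans T R Q : ty_equiv T R -> ty_equiv R Q -> ty_equiv T Q
| eq_scal_zero (a : S) : ty_equiv (TScal a TZero) TZero
| eq_zero_scal T : is_type T -> ty_equiv (TScal 0 T) TZero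
| eq_one_scal T : is_type T -> ty_equiv (TScal 1 T) T
| eq_scal_scal (a b : S) T : is_type T ->
    ty_equiv (TScal a (TScal b T)) (TScal (a * b) T)
| eq_all_scal (a : S) T : is_type T ->
    ty_equiv (TAll (TScal a T)) (TScal a (TAll T))
| eq_cong_arr U U' T T' : is_unit U -> is_unit U' ->
    ty_equiv U U' -> ty_equiv T T' -> ty_equiv (TArr U T) (TArr U' T')
| eq_cong_all T T' : ty_equiv T T' -> ty_equiv (TAll T) (TAll T')
| eq_cong_scal (a : S) T T' : ty_equiv T T' -> ty_equiv (TScal a T) (TScal a T').

Definition ty_prec (S : comPzRingType) (T R : ty S) : Prop :=
  (is_type T /\ exists n : nat, ty_equiv R (TAll (abs 0 n T)))
  \/ (exists (S' U : ty S), is_unit U /\ ty_equiv T (TAll S')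
                             /\ ty_equiv R (subst 0 U S')).

Inductive ty_preceq (S : comPzRingType) : ty S -> ty S -> Prop :=
| preceq_refl T : ty_preceq T T
| preceq_step T R : ty_prec T R -> ty_preceq T R
| preceq_trans T R Q : ty_preceq T R -> ty_preceq R Q -> ty_preceq T Q.

From Pilot Require Import Defs.
From mathcomp Require Import all_boot all_algebra.

(* Scaling commutes with both generating steps of [ty_prec]: it slides under
   the binder by the axiom [forall X. a.T == a.forall X. T], and substitution
   distributes over [a._]. *)

Lemma abs_is_unit_type {S : Type} (n : nat) (t : ty S) (k : nat) :
  (is_unit t -> is_unit (abs k n t)) /\ (is_type t -> is_type (abs k n t)).
Proof.
elim: t k => [m|u IHu r IHr|r IHr|b r IHr|] k /=.
- by case: ifP => _ //; case: ifP.
- have [Hu _] := IHu k; have [_ Hr] := IHr k.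
  by split=> /andP [/Hu -> /Hr ->].
- exact: IHr.
- by have [_ Hr] := IHr k.
- by [].
Qed.

Lemma is_type_abs {S : Type} (k n : nat) {t : ty S} :
  is_type t -> is_type (abs k n t).
Proof. by have [_] := abs_is_unit_type n t k. Qed.

Lemma ty_equiv_is_type {S : comPzRingType} {T R : ty S} :
  ty_equiv T R -> is_type T /\ is_type R.
Proof.
elim=> //= {T R}.
- by move=> T R _ [].
- by move=> T R Q _ [HT _] _ [_ HQ].
- by move=> U U' T T' -> -> _ _ _ [].
Qed.

Lemma ty_equiv_scal_all {S : comPzRingType} {a : S} {T R : ty S} :
  is_type T -> ty_equiv R (TAll T) -> ty_equiv (TScal a R) (TAll (TScal a T)).
Proof.
move=> HT HR; apply: Defs.eq_trans (eq_cong_scal a HR) _.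
exact/Defs.eq_sym/eq_all_scal.
Qed.

Lemma ty_prec_scal {S : comPzRingType} (a : S) (T R : ty S) :
  ty_prec T R -> ty_prec (TScal a T) (TScal a R).
Proof.
case=> [[HT [n HR]]|[S' [U [HU [HT HR]]]]].
- left; split=> //; exists n.
  exact: ty_equiv_scal_all (is_type_abs 0 n HT) HR.
- right; exists (TScal a S'), U; split=> //; split; last exact: eq_cong_scal.
  have [_ /= HS'] := ty_equiv_is_type HT.
  exact: ty_equiv_scal_all HS' HT.
Qed.

Lemma ty_preceq_scal {S : comPzRingType} (a : S) (T R : ty S) :
  ty_preceq T R -> ty_preceq (TScal a T) (TScal a R).
Proof.
elim=> {T R} [T|T R /(ty_prec_scal a) /preceq_step //|T R Q _ HTR _ HRQ].
- exact: preceq_refl.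
- exact: preceq_trans HTR HRQ.
Qed.

Theorem mainTheorem19 (S : comPzRingType) (T R : ty S) (a : S) :
  is_type T -> is_type R -> ty_preceq T R -> ty_preceq (TScal a T) (TScal a R).
Proof. by move=> _ _; apply: ty_preceq_scal. Qed.
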